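(* Consider MINTIME under the independent cascade model with budget $k$ and coverage threshold $\eta$, and let $R_{\mathit{OPT}}$ be the optimal propagation time. Let $\epsilon>0$, use coverage threshold $\eta-\epsilon$ and budget threshold $k(1+\ln(\eta/\epsilon))$. If the coverage function $\sigma^R(\cdot)$ can be computed exactly, then there is a greedy algorithm (greedy seed selection for coverage within $R$ steps, combined with a linear search over $R=0,\dots,n-1$) that approximates MINTIME within an $(\alpha,\beta,\gamma)$ factor with $\alpha=1$, $\beta=1+\ln(\eta/\epsilon)$ and $\gamma=1-\epsilon/\eta$, i.e., it outputs $S$ and $R$ with $|S|\le\beta k$, $R\le\alpha R_{\mathit{OPT}}$ and $\sigma^R(S)\ge\gamma\eta$. Furthermore, for every $\phi>0$ there is a $\delta>0$ such that, using $(1-\delta)$-approximate values of $\sigma^R(\cdot)$, the greedy algorithm approximates MINTIME within an $(\alpha,\beta,\gamma)$ factor with $\alpha=1$, $\beta=(1+\phi)(1+\ln(\eta/\epsilon))$ and $\gamma=1-\epsilon/\eta$.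
   Context: Independent cascade (IC) model on a directed graph $G=(V,E)$, $n=|V|$, with arc probabilities $p_{v,u}$: seed nodes are active at time $0$; when a node $v$ becomes active at time $t$, it has one chance to activate each inactive out-neighbour $u$, succeeding independently with probability $p_{v,u}$, in which case $u$ becomes active at time $t+1$. $\sigma^R(S)$ denotes the expected number of nodes active by time $R$ with seed set $S$. MINTIME: given $G$, an integer $k$ and a real $\eta\le|V|$, find $S\subseteq V$ with $|S|\le k$ and the smallest $t\in\mathbb{N}$ with $\sigma^t(S)\ge\eta$; $R_{\mathit{OPT}}$ is this smallest $t$. The greedy step for fixed $R$: start with $S=\emptyset$ and, while $\sigma^R(S)<\eta-\epsilon$, add a node $w\notin S$ maximizing $\min(\sigma^R(S\cup\{w\}),\eta)-\sigma^R(S)$. Using $(1-\delta)$-approximate values means replacing $\sigma^R$ by an estimate $\sigma'$ with $(1-\delta)\sigma^R(S)\le\sigma'(S)\le\sigma^R(S)$ for all $S$. *)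

From HB Require Import structures.
From mathcomp Require Import all_boot all_order all_algebra.
From mathcomp Require Import reals exp.
Set Implicit Arguments. Unset Strict Implicit. Unset Printing Implicit Defensive.
Import Order.TTheory GRing.Theory Num.Theory.
Local Open Scope ring_scope.

Section IC.
Variables (R : realType) (V : finType).
Variables (E : rel V) (p : V -> V -> R).

(* Outcome of all coin flips: x (v,u) = true iff the (unique) activation
   attempt of v on u succeeds. Each node becomes newly active at most once,
   hence each arc is attempted at most once, so one coin per arc suffices. *)
Definition coins := {ffun V * V -> bool}.

Definition coin_prob (x : coins) : R :=
  \prod_(e : V * V)
     (if E e.1 e.2 then (if x e then p e.1 e.2 else 1 - p e.1 e.2)
      else (if x e then 0 else 1)).

(* One time step: state = (active set, nodes newly active at current time). *)
Definition ic_step (x : coins) (st : {set V} * {set V}) : {set V} * {set V} :=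
  let A := st.1 in let N := st.2 in
  let New := [set u | (u \notin A) && [exists v in N, E v u && x (v, u)]] in
  (A :|: New, New).

Definition active_by (x : coins) (S : {set V}) (t : nat) : {set V} :=
  (iter t (ic_step x) (S, S)).1.

Definition sigma (t : nat) (S : {set V}) : R :=
  \sum_(x : coins) coin_prob x * (#|active_by x S t|)%:R.

Definition is_Ropt (k : nat) (eta : R) (t : nat) : Prop :=
  (exists S : {set V}, (#|S| <= k)%N /\ eta <= sigma t S) /\
  (forall t', (t' < t)%N -> forall S : {set V}, (#|S| <= k)%N -> sigma t' S < eta).
End IC.

Section Greedy.
Variables (R : realType) (V : finType).

Definition gain (f : {set V} -> R) (eta : R) (S : {set V}) (w : V) : R :=
  Num.min (f (w |: S)) eta - f S.

Definition valid_choice (f : {set V} -> R) (eta : R) (ch : {set V} -> V) : Prop :=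
  forall S : {set V}, S != setT ->
    ch S \notin S /\ forall w, w \notin S -> gain f eta S w <= gain f eta S (ch S).

(* Greedy: from the empty set, while f S < thr (and a node outside S exists),
   add the chosen maximizer; at most |V| additions can occur. *)
Definition greedy (f : {set V} -> R) (thr : R) (ch : {set V} -> V) : {set V} :=
  iter #|V| (fun S => if (f S < thr) && (S != setT) then ch S |: S else S) set0.

Definition mintime_greedy (f : nat -> {set V} -> R) (eta eps budget : R)
    (ch : nat -> {set V} -> V) : option ({set V} * nat) :=
  let acc t := let S := greedy (f t) (eta - eps) (ch t) in
               (eta - eps <= f t S) && ((#|S|)%:R <= budget) in
  let t := find acc (iota 0 #|V|) in
  if (t < #|V|)%N then Some (greedy (f t) (eta - eps) (ch t), t) else None.
End Greedy.

From HB Require Import structures.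
From mathcomp Require Import all_boot all_order all_algebra.
From mathcomp Require Import reals sequences exp.
From mathcomp Require Import ring lra.
Set Implicit Arguments. Unset Strict Implicit. Unset Printing Implicit Defensive.
Import Order.TTheory GRing.Theory Num.Theory.
Local Open Scope ring_scope.

(* For a fixed coin outcome the nodes active by time [t] are the [t]-fold closure of
   the seed set along successful arcs; this closure distributes over unions, so its
   size, and hence [sigma t], is monotone and submodular, and it stabilises after
   [n - 1] steps, so [R_OPT < n].  At [t = R_OPT] some optimal seed set of size [<= k]
   covers [eta], so by submodularity one of its nodes gains at least [1/k] of the
   remaining gap: each greedy step shrinks the gap by a factor [1 - 1/k], up to the
   additive error [c] of the estimates.  Before the last step the gap still exceeds
   [eps], so [eps < eta (1 - 1/k)^j + k c], which bounds the number [j + 1] of seeds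
   by [(1 + phi)(1 + ln (eta/eps)) k] as soon as [k c <= eps (1 - exp (- phi))]; a
   relative error [delta = eps (1 - exp (- phi)) / (k sigma(V))] is such an additive
   error.  Hence the linear search stops at some [t <= R_OPT]. *)

Section ExtensiveIteration.
Variables (T : finType) (F : {set T} -> {set T}).
Hypothesis F_ext : forall X : {set T}, X \subset F X.

Lemma iter_stable_from (X : {set T}) j : iter j.+1 F X = iter j F X ->
  forall m, iter (j + m) F X = iter j F X.
Proof.
move=> hj; elim=> [|m IH]; first by rewrite addn0.
by rewrite addnS /= IH; exact: hj.
Qed.

Lemma card_iter_strict (X : {set T}) t :
  (forall j, (j < t)%N -> iter j.+1 F X != iter j F X) ->
  (#|X| + t <= #|iter t F X|)%N.
Proof.
elim: t => [|t IH] hne; first by rewrite addn0.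
rewrite addnS; apply: leq_ltn_trans (IH (fun j hj => hne j (ltnW hj))) _.
by apply: proper_card; rewrite properEneq eq_sym hne ?F_ext.
Qed.

Lemma iter_extensive_stable (X : {set T}) m :
  iter (#|T| - #|X| + m) F X = iter (#|T| - #|X|) F X.
Proof.
set N := (#|T| - #|X|)%N.
have [[j /eqP hj]|] := altP (@existsP _ (fun j : 'I_N => iter j.+1 F X == iter j F X)).
  by rewrite -(subnKC (ltnW (ltn_ord j))) -addnA !(iter_stable_from hj).
rewrite negb_exists => /forallP hne; apply: iter_stable_from.
have full : iter N F X = setT.
  apply/eqP; rewrite eqEcard subsetT cardsT.
  by have := card_iter_strict (fun j hj => hne (Ordinal hj)); rewrite subnKC ?max_card.
by rewrite /= full; apply/eqP; rewrite eqEsubset subsetT F_ext.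
Qed.
End ExtensiveIteration.

Section Submodular.
Variables (R : realType) (T : finType).

Definition submodular (g : {set T} -> R) :=
  forall A B, g (A :|: B) + g (A :&: B) <= g A + g B.

Lemma submodular_sum_gain g (S U : {set T}) : submodular g ->
  g (S :|: U) - g S <= \sum_(w in U) (g (w |: S) - g S).
Proof.
move=> g_sub; rewrite -big_enum /= -{1}(set_enum U).
elim: (enum U) (enum_uniq (mem U)) => [|w s IH] /=.
  by rewrite big_nil set_nil setU0 subrr.
case/andP => ws us; rewrite big_cons.
have := g_sub (S :|: [set:: s]) (w |: S).
have -> : (S :|: [set:: s]) :|: (w |: S) = S :|: [set:: w :: s].
  by apply/setP => y; rewrite !inE; case: (y == w); case: (y \in S); case: (y \in s).
have -> : (S :|: [set:: s]) :&: (w |: S) = S.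
  apply/setP => y; rewrite !inE.
  by case: (y \in S); case: (y =P w) => [->|_]; rewrite ?orbT ?orbF ?(negbTE ws) ?andbF.
by have := IH us; lra.
Qed.
End Submodular.

Section Cascade.
Variables (R : realType) (V : finType) (E : rel V) (p : V -> V -> R).

Definition spread (x : coins V) (X : {set V}) : {set V} :=
  X :|: [set u | [exists v in X, E v u && x (v, u)]].

Definition reached (x : coins V) (S : {set V}) (t : nat) := iter t (spread x) S.

(* The frontier bookkeeping of [ic_step] is invisible in the active set: arcs out
   of nodes activated earlier were already tried, so re-trying them adds nothing. *)
Lemma active_by_reached x S t : active_by E x S t = reached x S t.
Proof.
rewrite /active_by /reached.
suff : let st := iter t (ic_step E x) (S, S) in
  [/\ st.1 = iter t (spread x) S, st.2 \subset st.1 &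
      forall v u, v \in st.1 -> v \notin st.2 -> E v u -> x (v, u) -> u \in st.1].
  by case.
elim: t => [|t [IH1 IH2 IH3]] /=; first by split => // v u ->.
set st := iter t (ic_step E x) (S, S) in IH1 IH2 IH3 *.
rewrite -IH1 /ic_step /=; split.
- apply/setP => u; rewrite /spread !inE; case uA: (u \in st.1) => //=.
  apply/existsP/existsP => -[v /andP[vN /andP[Evu xvu]]].
    by exists v; rewrite (subsetP IH2 _ vN) Evu xvu.
  exists v; rewrite Evu xvu !andbT; apply/negPn/negP => vN'.
  by rewrite (IH3 v u vN vN' Evu xvu) in uA.
- by apply/subsetP => u; rewrite !inE => ->; rewrite orbT.
- move=> v u + vnew Evu xvu; rewrite !in_setU (negbTE vnew) orbF => vA.
  case vN: (v \in st.2); last by rewrite (IH3 v u vA) ?vN.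
  case uA: (u \in st.1) => //=.
  by rewrite inE uA /=; apply/existsP; exists v; rewrite vN Evu xvu.
Qed.

Lemma spreadU x (A B : {set V}) : spread x (A :|: B) = spread x A :|: spread x B.
Proof.
apply/setP => u; rewrite /spread !inE.
have -> : [exists v in A :|: B, E v u && x (v, u)] =
          [exists v in A, E v u && x (v, u)] || [exists v in B, E v u && x (v, u)].
  apply/existsP/orP => [[v]|[]/existsP[v]]; rewrite ?inE.
  - by case/andP => /orP[vA|vB] h; [left|right]; apply/existsP; exists v; rewrite ?vA ?vB.
  - by case/andP => vA h; exists v; rewrite inE vA.
  - by case/andP => vB h; exists v; rewrite inE vB orbT.
by case: (u \in A); case: (u \in B); case: [exists v in A, _]; case: [exists v in B, _].
Qed.

Lemma reachedU x (A B : {set V}) t :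
  reached x (A :|: B) t = reached x A t :|: reached x B t.
Proof. by elim: t => //= t IH; rewrite IH spreadU. Qed.

Lemma reached_mono x (A B : {set V}) t :
  A \subset B -> reached x A t \subset reached x B t.
Proof. by move=> /setUidPr <-; rewrite reachedU subsetUl. Qed.

Lemma reached0 x t : reached x set0 t = set0.
Proof.
elim: t => //= t ->; apply/setP => u; rewrite /spread !inE /=.
by apply/negbTE/existsP => -[v]; rewrite inE.
Qed.

Lemma reached_stable x S t :
  (#|V|.-1 <= t)%N -> reached x S t = reached x S #|V|.-1.
Proof.
move=> ht; have [->|[s sS]] := set_0Vmem S; first by rewrite !reached0.
have hN : (#|V| - #|S| <= #|V|.-1)%N.
  by rewrite -subn1 leq_sub2l // card_gt0; apply/set0Pn; exists s.
rewrite /reached -(subnKC ht) -(subnKC hN) -!addnA.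
by rewrite !iter_extensive_stable // => X; exact: subsetUl.
Qed.

Lemma card_reached_submodular x t :
  submodular (fun S => (#|reached x S t|)%:R : R).
Proof.
move=> A B; rewrite -!natrD ler_nat reachedU -(cardsUI (reached x A t)).
rewrite leq_add2l subset_leq_card // subsetI.
by rewrite !reached_mono ?subsetIl ?subsetIr.
Qed.

Hypothesis p_prob : forall v u, E v u -> 0 <= p v u <= 1.

Lemma coin_prob_ge0 x : 0 <= coin_prob E p x.
Proof.
apply: prodr_ge0 => e _.
case: (E e.1 e.2) (p_prob (v:=e.1) (u:=e.2)) => [/(_ erefl)/andP[h0 h1]|_];
  by case: (x e); rewrite ?subr_ge0.
Qed.

Lemma sigma_reached t S :
  sigma E p t S = \sum_x coin_prob E p x * (#|reached x S t|)%:R.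
Proof. by apply: eq_bigr => x _; rewrite active_by_reached. Qed.

Lemma sigma_mono t (A B : {set V}) : A \subset B -> sigma E p t A <= sigma E p t B.
Proof.
move=> AB; rewrite !sigma_reached; apply: ler_sum => x _.
by rewrite ler_wpM2l ?coin_prob_ge0 // ler_nat subset_leq_card ?reached_mono.
Qed.

Lemma sigma0 t : sigma E p t set0 = 0.
Proof. by rewrite sigma_reached big1 // => x _; rewrite reached0 cards0 mulr0. Qed.

Lemma sigma_stable t S :
  (#|V|.-1 <= t)%N -> sigma E p t S = sigma E p #|V|.-1 S.
Proof.
by move=> ht; rewrite !sigma_reached; apply: eq_bigr => x _; rewrite reached_stable.
Qed.

Lemma sigma_submodular t : submodular (sigma E p t).
Proof.
move=> A B; rewrite !sigma_reached -!big_split /=; apply: ler_sum => x _.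
by rewrite -!mulrDr ler_wpM2l ?coin_prob_ge0 ?card_reached_submodular.
Qed.

Lemma is_Ropt_k_gt0 k eta Ropt : 0 < eta -> is_Ropt E p k eta Ropt -> (0 < k)%N.
Proof.
move=> eta_gt0 [[S [Sk etaS]] _]; rewrite lt0n; apply/eqP => k0.
move: Sk; rewrite k0 leqn0 cards_eq0 => /eqP S0.
by move: etaS; rewrite S0 sigma0; lra.
Qed.

Lemma is_Ropt_lt_card k eta Ropt :
  (0 < #|V|)%N -> is_Ropt E p k eta Ropt -> (Ropt < #|V|)%N.
Proof.
move=> V_gt0 [[S [Sk etaS]] Ropt_min]; rewrite ltnNge; apply/negP => hle.
have ltR : (#|V|.-1 < Ropt)%N by rewrite prednK.
have := Ropt_min _ ltR S Sk.
by rewrite -(sigma_stable _ (ltnW ltR)); lra.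
Qed.
End Cascade.

Section GreedyRun.
Variables (R : realType) (V : finType) (f : {set V} -> R) (thr : R) (ch : {set V} -> V).
Hypothesis ch_notin : forall S, S != setT -> ch S \notin S.
Hypothesis thr_setT : thr <= f setT.

Definition greedy_add (S : {set V}) : {set V} :=
  if (f S < thr) && (S != setT) then ch S |: S else S.

Lemma greedyE : greedy f thr ch = iter #|V| greedy_add set0.
Proof. by []. Qed.

Lemma card_greedy_iter i :
  f (iter i greedy_add set0) < thr -> #|iter i greedy_add set0| = i.
Proof.
elim: i => [|i IH] /=; first by rewrite cards0.
set S := iter i greedy_add set0 in IH *.
rewrite /greedy_add; have [fS|fS] := ltrP (f S) thr; last by rewrite ltNge fS.
have ST : S != setT by apply: contraTneq fS => ->; rewrite -leNgt.
by rewrite ST cardsU1 (ch_notin ST) IH.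
Qed.

Lemma greedy_ge_thr : thr <= f (greedy f thr ch).
Proof.
rewrite greedyE leNgt; apply/negP => lt.
have full : iter #|V| greedy_add set0 = setT.
  by apply/eqP; rewrite eqEcard subsetT cardsT /= card_greedy_iter.
by move: lt; rewrite full ltNge thr_setT.
Qed.
End GreedyRun.

Lemma steps_le_budget (R : realType) (k j : nat) (eta eps phi c : R) :
  (0 < k)%N -> 0 < eps -> eps <= eta -> 0 <= phi ->
  k%:R * c <= eps * (1 - expR (- phi)) ->
  eps < eta * (1 - k%:R^-1) ^+ j + k%:R * c ->
  (j.+1)%:R <= (1 + phi) * (1 + ln (eta / eps)) * k%:R.
Proof.
move=> k_gt0 eps_gt0 eps_le phi_ge0 kc_le gap_gt.
set kr : R := k%:R; set L := ln (eta / eps).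
have kr_ge1 : 1 <= kr by rewrite ler1n.
have kr_gt0 : 0 < kr by lra.
have L_ge0 : 0 <= L by rewrite ln_ge0 // ler_pdivlMr // mul1r.
have etaE : eta = eps * expR L.
  rewrite /L lnK; first by rewrite mulrC divfK ?gt_eqF.
  by rewrite posrE divr_gt0 //; lra.
have q_le : (1 - kr^-1) ^+ j <= expR (- (j%:R / kr)).
  rewrite -mulrN expRM_natl; apply: lerXn2r; rewrite ?nnegrE ?expR_ge0 ?expR_ge1Dx //.
  by rewrite subr_ge0 invf_le1.
have : eps * expR (- phi) < eps * expR (L - j%:R / kr).
  rewrite expRD mulrA -etaE.
  have : eta * (1 - kr^-1) ^+ j <= eta * expR (- (j%:R / kr)) by rewrite ler_wpM2l; lra.
  lra.
rewrite ltr_pM2l // ltr_expR => j_lt.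
have : j%:R / kr < L + phi by lra.
rewrite ltr_pdivrMr // => jk.
have : 0 <= kr * (phi * L) by rewrite !mulr_ge0 //; lra.
rewrite -addn1 natrD.
have -> : (1 + phi) * (1 + L) * kr = kr + (L + phi) * kr + kr * (phi * L) by ring.
lra.
Qed.

Section GreedyAnalysis.
Variables (R : realType) (V : finType) (sg f : {set V} -> R).
Variables (eta eps c phi : R) (k : nat) (Sopt : {set V}) (ch : {set V} -> V).
Hypotheses (sg_mono : forall A B : {set V}, A \subset B -> sg A <= sg B)
  (sg_submod : submodular sg) (sg0_ge0 : 0 <= sg set0).
Hypotheses (k_gt0 : (0 < k)%N) (card_Sopt : (#|Sopt| <= k)%N) (eta_le : eta <= sg Sopt).
Hypotheses (f_le : forall S, f S <= sg S) (f_ge : forall S, sg S - c <= f S).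
Hypotheses (eps_gt0 : 0 < eps) (eps_le : eps <= eta) (c_ge0 : 0 <= c) (phi_ge0 : 0 <= phi).
Hypothesis kc_le : k%:R * c <= eps * (1 - expR (- phi)).
Hypothesis ch_valid : valid_choice f eta ch.

Lemma k_ge1 : 1 <= k%:R :> R. Proof. by rewrite ler1n. Qed.

Lemma invk_le1 : k%:R^-1 <= 1 :> R. Proof. by rewrite invf_le1 ?k_ge1 ?ltr0n. Qed.

Lemma kc_lt_eps : k%:R * c < eps.
Proof. by have := kc_le; have := mulr_gt0 eps_gt0 (expR_gt0 (- phi)); lra. Qed.

Lemma c_le_kc : c <= k%:R * c.
Proof. by rewrite ler_peMl // k_ge1. Qed.

Lemma exists_gain_ge_avg S : sg S < eta ->
  exists2 w, w \in Sopt & (eta - sg S) / k%:R <= sg (w |: S) - sg S.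
Proof.
move=> sgS; have k_pos : 0 < k%:R :> R by rewrite ltr0n.
have [/exists_inP[w wS hw]|] :=
  boolP [exists w in Sopt, (eta - sg S) / k%:R <= sg (w |: S) - sg S].
  by exists w.
rewrite negb_exists_in => /forall_inP small.
have sum_ge : eta - sg S <= \sum_(w in Sopt) (sg (w |: S) - sg S).
  apply: le_trans (submodular_sum_gain S Sopt sg_submod).
  by rewrite lerD2r (le_trans eta_le) ?sg_mono ?subsetUr.
have [S0|[w0 w0S]] := set_0Vmem Sopt; first by move: sum_ge; rewrite S0 big_set0; lra.
have : \sum_(w in Sopt) (sg (w |: S) - sg S) < \sum_(w in Sopt) (eta - sg S) / k%:R.
  apply: ltr_sum; first by apply/hasP; exists w0; rewrite ?mem_index_enum.
  by move=> w wS; rewrite ltNge small.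
rewrite sumr_const -mulr_natl.
have : (#|Sopt|)%:R * ((eta - sg S) / k%:R) <= k%:R * ((eta - sg S) / k%:R).
  by rewrite ler_wpM2r ?ler_nat // divr_ge0; lra.
have : k%:R * ((eta - sg S) / k%:R) = eta - sg S by rewrite mulrC divfK ?gt_eqF.
lra.
Qed.

Lemma greedy_add_gap S : f S < eta - eps -> S != setT ->
  eta - f (ch S |: S) <= (1 - k%:R^-1) * (eta - f S) + c.
Proof.
move=> fS ST; have k_pos : 0 < k%:R :> R by rewrite ltr0n.
have iK_le1 := invk_le1.
have sgS : sg S < eta by have := f_ge S; have := kc_lt_eps; have := c_le_kc; lra.
have [w wS hw] := exists_gain_ge_avg sgS.
have wnS : w \notin S.
  apply: contraTN hw => wS'; rewrite (setUidPr _) ?sub1set // subrr -ltNge.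
  by rewrite divr_gt0 //; lra.
have [_ /(_ w wnS)] := ch_valid ST; rewrite /gain => gain_ch.
(* The slack [sg S - f S] of the estimate is kept in full, not only its [1/k] share. *)
have gain_w : (eta - f S) / k%:R - c + f S <= Num.min (f (w |: S)) eta.
  have : 0 <= (sg S - f S) * (1 - k%:R^-1) by rewrite mulr_ge0 ?subr_ge0 ?f_le.
  have : (eta - f S) / k%:R <= eta - f S.
    by rewrite ler_pdivrMr // ler_peMr ?k_ge1 //; have := eps_gt0; lra.
  rewrite le_min; have := f_ge (w |: S); have := c_ge0; move: hw; rewrite !mulrBl !mulrBr.
  by move=> *; apply/andP; split; lra.
have := ge_min (f (ch S |: S)) (f (ch S |: S)) eta; rewrite lexx /=.
rewrite mulrBl mul1r (mulrC k%:R^-1) -/(_ / k%:R); lra.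
Qed.

Definition gap_bounded (X : {set V}) : Prop :=
  eta - f X <= eta * (1 - k%:R^-1) ^+ #|X| + k%:R * c /\
  forall j, #|X| = j.+1 -> eps < eta * (1 - k%:R^-1) ^+ j + k%:R * c.

Lemma gap_bounded0 : gap_bounded set0.
Proof.
split=> [|j]; last by rewrite cards0.
by rewrite cards0 expr0 mulr1; have := f_ge set0; have := c_le_kc; have := sg0_ge0; lra.
Qed.

Lemma gap_bounded_add X : gap_bounded X -> gap_bounded (greedy_add f (eta - eps) ch X).
Proof.
rewrite /greedy_add; case: ifP => [/andP[fX XT] [gapX _]|_]; last exact: id.
have [chX _] := ch_valid XT.
have iK_le1 := invk_le1.
rewrite /gap_bounded cardsU1 chX add1n; split=> [|j [<-]]; last by lra.
apply: le_trans (greedy_add_gap fX XT) _.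
have : (1 - k%:R^-1) * (eta - f X) <=
       (1 - k%:R^-1) * (eta * (1 - k%:R^-1) ^+ #|X| + k%:R * c).
  by rewrite ler_wpM2l // subr_ge0.
have -> : (1 - k%:R^-1) * (eta * (1 - k%:R^-1) ^+ #|X| + k%:R * c) =
          eta * (1 - k%:R^-1) ^+ #|X|.+1 + k%:R * c - c.
  by rewrite exprS; field; rewrite pnatr_eq0 -lt0n.
lra.
Qed.

Lemma greedy_ge_target : eta - eps <= f (greedy f (eta - eps) ch).
Proof.
apply: greedy_ge_thr => [S /ch_valid[]//|].
have := f_ge setT; have := sg_mono (subsetT Sopt); have := eta_le; have := kc_lt_eps.
have := c_le_kc.
lra.
Qed.

Lemma card_greedy_le :
  (#|greedy f (eta - eps) ch|)%:R <= (1 + phi) * (1 + ln (eta / eps)) * k%:R.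
Proof.
have [_] : gap_bounded (greedy f (eta - eps) ch).
  rewrite greedyE; elim: #|V| => [|n IH] /=; first exact: gap_bounded0.
  exact: gap_bounded_add.
case: #|_| => [_|j last_step].
  have L_ge0 : 0 <= ln (eta / eps) by rewrite ln_ge0 // ler_pdivlMr // mul1r.
  by rewrite !mulr_ge0 ?ler0n ?addr_ge0.
exact: (steps_le_budget k_gt0 eps_gt0 eps_le phi_ge0 kc_le (last_step _ erefl)).
Qed.
End GreedyAnalysis.

Lemma mintime_greedy_Some (R : realType) (V : finType) (f : nat -> {set V} -> R)
    (eta eps B : R) (ch : nat -> {set V} -> V) (t0 : nat) :
  (t0 < #|V|)%N ->
  eta - eps <= f t0 (greedy (f t0) (eta - eps) (ch t0)) ->
  (#|greedy (f t0) (eta - eps) (ch t0)|)%:R <= B ->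
  exists S t, mintime_greedy f eta eps B ch = Some (S, t) /\ (t <= t0)%N /\
    eta - eps <= f t S /\ (#|S|)%:R <= B.
Proof.
move=> t0_lt cover0 card0; rewrite /mintime_greedy; cbv zeta.
set acc := fun t => (eta - eps <= f t (greedy (f t) (eta - eps) (ch t))) &&
                    ((#|greedy (f t) (eta - eps) (ch t)|)%:R <= B).
have acc0 : acc t0 by rewrite /acc cover0 card0.
have has_acc : has acc (iota 0 #|V|) by apply/hasP; exists t0; rewrite ?mem_iota.
have := nth_find 0 has_acc; rewrite has_find size_iota in has_acc.
rewrite has_acc nth_iota // add0n => /andP[cover card].
do 2 eexists; split; [reflexivity | split=> //].
rewrite leqNgt; apply/negP => lt0.
by have := before_find 0 lt0; rewrite nth_iota // add0n acc0.
Qed.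

Lemma mintime_greedy_approx (R : realType) (V : finType) (E : rel V) (p : V -> V -> R)
    (k : nat) (eta eps c phi : R) (Ropt : nat) (f : nat -> {set V} -> R)
    (ch : nat -> {set V} -> V) :
  (forall v u, E v u -> 0 <= p v u <= 1) -> (0 < #|V|)%N ->
  0 < eps -> eps <= eta -> is_Ropt E p k eta Ropt ->
  (forall t S, f t S <= sigma E p t S) ->
  (forall S, sigma E p Ropt S - c <= f Ropt S) ->
  0 <= c -> 0 <= phi -> k%:R * c <= eps * (1 - expR (- phi)) ->
  (forall t, valid_choice (f t) eta (ch t)) ->
  exists S t,
    mintime_greedy f eta eps ((1 + phi) * (1 + ln (eta / eps)) * k%:R) ch = Some (S, t) /\
    (t <= Ropt)%N /\ (#|S|)%:R <= (1 + phi) * (1 + ln (eta / eps)) * k%:R /\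
    eta - eps <= sigma E p t S.
Proof.
move=> p_prob V_gt0 eps_gt0 eps_le Ropt_spec f_le f_ge c_ge0 phi_ge0 kc_le ch_valid.
have k_gt0 : (0 < k)%N by apply: is_Ropt_k_gt0 Ropt_spec; lra.
have [[Sopt [card_Sopt eta_le]] _] := Ropt_spec.
have sg_mono := sigma_mono p_prob Ropt.
have sg0_ge0 : 0 <= sigma E p Ropt set0 by rewrite sigma0.
have greedy_spec :=
  greedy_ge_target sg_mono k_gt0 eta_le f_ge eps_gt0 c_ge0 kc_le (ch_valid Ropt).
have greedy_card := card_greedy_le sg_mono (sigma_submodular p_prob Ropt) sg0_ge0 k_gt0
  card_Sopt eta_le (f_le Ropt) f_ge eps_gt0 eps_le c_ge0 phi_ge0 kc_le (ch_valid Ropt).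
have [S [t [-> [le_t [cover card]]]]] :=
  mintime_greedy_Some (is_Ropt_lt_card V_gt0 Ropt_spec) greedy_spec greedy_card.
by exists S, t; split=> //; split=> //; split=> //; apply: le_trans cover (f_le t S).
Qed.

Lemma mintime_greedy_relative (R : realType) (V : finType) (E : rel V) (p : V -> V -> R)
    (k : nat) (eta eps phi : R) (Ropt : nat) :
  (forall v u, E v u -> 0 <= p v u <= 1) -> (0 < #|V|)%N ->
  0 < eps -> eps <= eta -> is_Ropt E p k eta Ropt -> 0 < phi ->
  exists2 delta : R, 0 < delta &
    forall (sig' : nat -> {set V} -> R) (ch : nat -> {set V} -> V),
    (forall t S, (1 - delta) * sigma E p t S <= sig' t S /\ sig' t S <= sigma E p t S) ->
    (forall t, valid_choice (sig' t) eta (ch t)) ->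
    exists S t,
      mintime_greedy sig' eta eps ((1 + phi) * (1 + ln (eta / eps)) * k%:R) ch
        = Some (S, t) /\
      (t <= Ropt)%N /\ (#|S|)%:R <= (1 + phi) * (1 + ln (eta / eps)) * k%:R /\
      eta - eps <= sigma E p t S.
Proof.
move=> p_prob V_gt0 eps_gt0 eps_le Ropt_spec phi_gt0.
have k_gt0 : (0 < k)%N by apply: is_Ropt_k_gt0 Ropt_spec; lra.
set M := sigma E p Ropt setT.
have M_ge S : sigma E p Ropt S <= M by apply: sigma_mono (subsetT S).
have M_gt0 : 0 < M by have [[S [_ etaS]] _] := Ropt_spec; have := M_ge S; lra.
have r_lt1 : expR (- phi) < 1 by rewrite expR_lt1 oppr_lt0.
pose delta := eps * (1 - expR (- phi)) / (k%:R * M).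
have delta_gt0 : 0 < delta by rewrite !(divr_gt0, mulr_gt0) ?ltr0n // subr_gt0.
exists delta => // sig' ch sig'_spec ch_valid.
have approx_ge S : sigma E p Ropt S - delta * M <= sig' Ropt S.
  have [lo _] := sig'_spec Ropt S.
  have : delta * sigma E p Ropt S <= delta * M by rewrite ler_wpM2l ?M_ge ?ltW.
  lra.
have kc_le : k%:R * (delta * M) <= eps * (1 - expR (- phi)).
  suff -> : k%:R * (delta * M) = eps * (1 - expR (- phi)) by [].
  by rewrite /delta; field; rewrite gt_eqF ?M_gt0 // pnatr_eq0 -lt0n.
exact: mintime_greedy_approx p_prob V_gt0 eps_gt0 eps_le Ropt_spec
  (fun t S => (sig'_spec t S).2) approx_ge (mulr_ge0 (ltW delta_gt0) (ltW M_gt0))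
  (ltW phi_gt0) kc_le ch_valid.
Qed.

Theorem theorem6 (R : realType) (V : finType) (E : rel V) (p : V -> V -> R)
  (k : nat) (eta eps : R) (Ropt : nat) :
  (forall v u, E v u -> 0 <= p v u <= 1) ->
  eta <= (#|V|)%:R ->
  0 < eps -> eps <= eta ->
  is_Ropt E p k eta Ropt ->
  (forall ch : nat -> {set V} -> V,
     (forall t, valid_choice (sigma E p t) eta (ch t)) ->
     let alpha : R := 1 in
     let beta : R := 1 + ln (eta / eps) in
     let gamma : R := 1 - eps / eta in
     exists (S : {set V}) (t : nat),
       mintime_greedy (sigma E p) eta eps (k%:R * (1 + ln (eta / eps))) ch
         = Some (S, t) /\
       t%:R <= alpha * Ropt%:R /\ (#|S|)%:R <= beta * k%:R /\
       gamma * eta <= sigma E p t S) /\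
  (forall phi : R, 0 < phi -> exists delta : R, 0 < delta /\
     forall (sig' : nat -> {set V} -> R),
     (forall t (S : {set V}),
        (1 - delta) * sigma E p t S <= sig' t S /\ sig' t S <= sigma E p t S) ->
     forall ch : nat -> {set V} -> V,
     (forall t, valid_choice (sig' t) eta (ch t)) ->
     let alpha : R := 1 in
     let beta : R := (1 + phi) * (1 + ln (eta / eps)) in
     let gamma : R := 1 - eps / eta in
     exists (S : {set V}) (t : nat),
       mintime_greedy sig' eta eps (beta * k%:R) ch = Some (S, t) /\
       t%:R <= alpha * Ropt%:R /\ (#|S|)%:R <= beta * k%:R /\
       gamma * eta <= sigma E p t S).
Proof.
move=> p_prob eta_le_n eps_gt0 eps_le Ropt_spec.
have eta_gt0 : 0 < eta by lra.
have V_gt0 : (0 < #|V|)%N by rewrite -(ltr0n R); lra.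
have gammaE : (1 - eps / eta) * eta = eta - eps by rewrite mulrBl mul1r divfK ?gt_eqF.
split=> [ch ch_valid alpha beta gamma | phi phi_gt0].
  have exact_ge S : sigma E p Ropt S - 0 <= sigma E p Ropt S by rewrite subr0.
  have no_error : k%:R * 0 <= eps * (1 - expR (- 0)) by rewrite oppr0 expR0 subrr !mulr0.
  have [S [t [run [le_t [card cover]]]]] := mintime_greedy_approx p_prob V_gt0 eps_gt0
    eps_le Ropt_spec (fun t S => lexx _) exact_ge (lexx 0) (lexx 0) no_error ch_valid.
  rewrite addr0 mul1r in run card; rewrite mulrC in run.
  exists S, t; rewrite /alpha /beta /gamma mul1r ler_nat gammaE.
  by split.
have [delta delta_gt0 run_spec] :=
  mintime_greedy_relative p_prob V_gt0 eps_gt0 eps_le Ropt_spec phi_gt0.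
exists delta; split=> // sig' sig'_spec ch ch_valid alpha beta gamma.
have [S [t [run [le_t [card cover]]]]] := run_spec sig' ch sig'_spec ch_valid.
exists S, t; rewrite /alpha /gamma mul1r ler_nat gammaE.
by split.
Qed.
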